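(* Let $m\ge 1$, $n\ge 0$, let $y_1,\dots,y_m$ be distinct integers each less than $-1$, let $x_1,\dots,x_n$ be distinct integers each greater than $1$, and let $D=\{1,y_1,\dots,y_m,x_1,\dots,x_n\}$. Then $diam(D)=diam(D\cup\{0\})$, and $diam(D)=4$ if $m=1$, $diam(D)=5$ if $m=2$, and $diam(D)=6$ if $m>2$.
   Context: A signed tree is a pair $(T,s)$ where $T$ is a finite tree and $s:E(T)\to\{+,-\}$. The signed degree $sdeg(v)$ of a vertex is the number of incident positive edges minus the number of incident negative edges. $(T,s)$ realizes (satisfies) a set $D$ of integers if $D=\{sdeg(v):v\in V(T)\}$. For a set $D$ containing $1$ or $-1$, $diam(D)=\min\{diam(T): \text{some signed tree }(T,s)\text{ realizes }D\}$, where $diam(T)$ is the diameter of the tree $T$. *)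

From mathcomp Require Import all_boot all_order all_algebra.
Set Implicit Arguments. Unset Strict Implicit. Unset Printing Implicit Defensive.
Import Order.TTheory GRing.Theory Num.Theory.

Definition is_tree (T : finType) (e : rel T) : Prop :=
  [/\ (exists x : T, True),
      (forall x y, e x y = e y x),
      (forall x, ~~ e x x),
      (forall x y, connect e x y)
    & (forall p : seq T, uniq p -> 3 <= size p -> ~~ cycle e p)].

(* a signing of the edges: s x y = true means the edge xy is positive *)
Definition is_signing (T : finType) (e : rel T) (s : T -> T -> bool) : Prop :=
  forall x y, e x y -> s x y = s y x.

Definition sdeg (T : finType) (e : rel T) (s : T -> T -> bool) (v : T) : int :=
  (#|[pred u | e v u && s v u]|%:Z - #|[pred u | e v u && ~~ s v u]|%:Z)%R.

Definition realizes (T : finType) (e : rel T) (s : T -> T -> bool)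
    (D : int -> Prop) : Prop :=
  (forall v : T, D (sdeg e s v)) /\ (forall d, D d -> exists v : T, sdeg e s v = d).

Definition has_walk (T : finType) (e : rel T) (x y : T) (k : nat) : Prop :=
  exists p : seq T, [/\ path e x p, last x p = y & size p = k].
Definition dist (T : finType) (e : rel T) (x y : T) (k : nat) : Prop :=
  has_walk e x y k /\ (forall j, has_walk e x y j -> k <= j).

Definition tree_diam (T : finType) (e : rel T) (d : nat) : Prop :=
  (exists x y, dist e x y d) /\ (forall x y k, dist e x y k -> k <= d).

Definition diamD (D : int -> Prop) (d : nat) : Prop :=
  (exists (T : finType) (e : rel T) (s : T -> T -> bool),
      [/\ is_tree e, is_signing e s, realizes e s D & tree_diam e d]) /\
  (forall (T : finType) (e : rel T) (s : T -> T -> bool) (d' : nat),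
      is_tree e -> is_signing e s -> realizes e s D -> tree_diam e d' -> d <= d').

(* If -1 is not a signed degree, a vertex of signed degree at most -2 has at least two
   negative edges, and the far end of a negative edge is not a leaf (such a leaf would have
   signed degree -1). Hence a simple path ending at such a vertex can be prolonged by two
   edges without going back. Prolonging at both ends the path between two vertices realizing
   values y_i, y_j gives a path of length d + 4, where d is their distance; d >= 1 when m >= 2,
   and d >= 2 can be arranged when m >= 3 since three vertices of a tree are never pairwise
   adjacent.
   Conversely, below a root of signed degree y_1 hang one negatively attached "gadget" of signed
   degree z for every other value z (including 0 if wanted), enough gadgets of value 1 and
   positive leaves. All other vertices get signed degree 1, and the tree has depth 2 except
   below the gadgets of y_2, ..., y_m, where it has depth 3. *)

From mathcomp Require Import all_boot all_order all_algebra zify.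
Import Order.TTheory GRing.Theory Num.Theory.
Set Implicit Arguments. Unset Strict Implicit. Unset Printing Implicit Defensive.

Lemma split_first (T : eqType) (a : pred T) (s : seq T) :
  has a s -> exists s1 z s2, [/\ s = s1 ++ z :: s2, a z & ~~ has a s1].
Proof.
elim: s => //= x s IHs; case ax: (a x) => /=.
  by move=> _; exists [::], x, s.
move=> /IHs[s1 [z [s2 [-> az nas1]]]].
by exists (x :: s1), z, s2; rewrite /= ax.
Qed.

Lemma cons_cat_last2 (T : Type) (x : T) (q : seq T) :
  0 < size q -> exists p u, x :: q = p ++ [:: u; last x q].
Proof.
case/lastP: q => // q t _; exists (belast x q), (last x q).
by rewrite last_rcons -rcons_cons lastI -!cats1 -catA.
Qed.

Lemma hasNbehead_nth (T : Type) (p : pred T) x0 (s : seq T) i :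
  ~~ has p (behead s) -> i < size s -> p (nth x0 s i) -> i = 0.
Proof.
case: s i => [|x s] [|i] //= nhas lt_i p_i; case/negP: nhas.
by apply/(has_nthP x0); exists i.
Qed.

Definition upath (T : eqType) (e : rel T) (p : seq T) := sorted e p && uniq p.

Section Tree.
Variables (T : finType) (e : rel T).
Hypothesis e_sym : symmetric e.
Hypothesis e_irr : irreflexive e.
Hypothesis e_acyc : forall p : seq T, uniq p -> 3 <= size p -> ~~ cycle e p.

Lemma rev_path_sym x p : path e (last x p) (rev (belast x p)) = path e x p.
Proof. by rewrite rev_path; apply: eq_path => y z; rewrite /= e_sym. Qed.

Lemma upath_rev p : upath e (rev p) = upath e p.
Proof.
rewrite /upath rev_uniq rev_sorted; congr (_ && _).
by apply: eq_sorted => y z; rewrite /= e_sym.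
Qed.

Lemma upath_rcons p u t z : upath e (p ++ [:: u; t]) -> e t z -> z != u ->
  upath e (p ++ [:: u; t; z]).
Proof.
case/andP=> sorted_p uniq_p tz zu.
have zt : z != t by apply: contraTneq tz => ->; rewrite e_irr.
have -> : p ++ [:: u; t; z] = rcons (p ++ [:: u; t]) z by rewrite -cats1 -catA.
rewrite /upath rcons_uniq uniq_p andbT; apply/andP; split.
  case: p sorted_p {uniq_p} => [|x p] /=; first by rewrite tz andbT.
  by rewrite rcons_path last_cat /= => ->.
rewrite mem_cat !inE (negbTE zu) (negbTE zt) !orbF; apply/negP => zp.
case/splitPr: zp sorted_p uniq_p => p1 p2; rewrite -catA cat_cons.
move=> /cat_sorted2[_ cyc]; rewrite cat_uniq => /and3P[_ _ uniq_cyc].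
have /negP[] := e_acyc uniq_cyc ltac:(by rewrite /= size_cat addn2).
by rewrite /= rcons_cat /= cat_path; move: cyc; rewrite /= cat_path => /andP[-> /=]; rewrite tz.
Qed.

Lemma forest_disjoint_paths x s t z :
  path e x (rcons s z) -> path e x (rcons t z) ->
  uniq (x :: rcons s z) -> uniq (x :: rcons t z) -> ~~ has (mem t) s -> s ++ t = [::].
Proof.
move=> xsz xtz uniq_s uniq_t disj_st; apply/eqP/negPn/negP => st_nil.
have uniq_cyc : uniq (x :: s ++ z :: rev t).
  move: uniq_s uniq_t; rewrite /= -!cats1 !mem_cat !cat_uniq !inE /= !orbF.
  rewrite !negb_or !mem_rev rev_uniq has_rev has_sym.
  move=> /and4P[/andP[-> ->] -> -> _] /and4P[/andP[-> _] -> -> _].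
  by rewrite disj_st.
have size_cyc : 2 < size (x :: s ++ z :: rev t).
  by move: st_nil; rewrite -size_eq0 /= !size_cat /= size_rev; lia.
have /negP[] := e_acyc uniq_cyc size_cyc.
rewrite /= rcons_cat /= cat_path /=; move: xsz; rewrite rcons_path => /andP[-> ->] /=.
by rewrite -rev_cons -(belast_rcons x t z) -{1}(last_rcons x t z) rev_path_sym.
Qed.

Lemma upath_unique x p q : path e x p -> path e x q ->
  uniq (x :: p) -> uniq (x :: q) -> last x p = last x q -> p = q.
Proof.
elim: p x q => [|a p IHp] x [|b q] //= => [_ _ _ /andP[xq _] lastq|_ _ /andP[xp _] _ lastp|].
- by move: xq; rewrite lastq mem_last.
- by move: xp; rewrite -lastp mem_last.
move=> /andP[xa pa] /andP[xb qb] /andP[xap uniq_ap] /andP[xbq uniq_bq] last_pq.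
have [eq_ab|ab] := eqVneq a b; first by subst b; rewrite (IHp a q).
have : has (mem (b :: q)) (a :: p).
  by apply/hasP; exists (last a p); rewrite ?mem_last // inE last_pq mem_last.
(* The first vertex of [a :: p] on [b :: q] closes two internally disjoint paths from [x]. *)
case/split_first=> s1 [z [s2 [def_ap zbq s1_bq]]].
have [t1 [t2 def_bq]] : exists t1 t2, b :: q = t1 ++ z :: t2 :> seq (T : eqType).
  by case/splitPr: zbq => t1 t2; exists t1, t2.
have path_prefix r1 r2 : path e x (r1 ++ z :: r2) -> path e x (rcons r1 z).
  by rewrite cat_path rcons_path /= => /and3P[-> -> _].
have uniq_prefix r1 r2 : uniq (x :: r1 ++ z :: r2) -> uniq (x :: rcons r1 z).
  by rewrite -cat_rcons -cat_cons cat_uniq => /andP[].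
have disj : ~~ has (mem t1) s1.
  apply/hasPn => w /(hasPn s1_bq); apply: contra => /= wt1.
  by rewrite def_bq mem_cat wt1.
have := forest_disjoint_paths (path_prefix _ s2 _) (path_prefix _ t2 _)
  (uniq_prefix _ s2 _) (uniq_prefix _ t2 _) disj.
rewrite -def_ap -def_bq /= xa xb xap xbq uniq_ap uniq_bq => /(_ pa qb isT isT).
case: s1 t1 def_ap def_bq {disj s1_bq} => [|? ?] [|? ?] // [eq_az _] [eq_bz _] _.
by rewrite eq_az eq_bz eqxx in ab.
Qed.

Lemma dist_upath x p : upath e (x :: p) -> dist e x (last x p) (size p).
Proof.
case/andP=> /= xp uniq_xp; split; first by exists p.
move=> _ [r [xr last_r <-]]; case: (shortenP xr) last_r => r' xr' uniq_r' sub_r' last_r'.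
rewrite (upath_unique xp xr' uniq_xp uniq_r' (esym last_r')).
by apply: uniq_leq_size; first by case/andP: uniq_r'.
Qed.

Hypothesis e_conn : forall x y, connect e x y.

Lemma upath_connect x y : exists p, upath e (x :: p) /\ last x p = y.
Proof.
case/connectP: (e_conn x y) => p xp ->.
by case: (shortenP xp) => p' xp' uniq_p' _; exists p'; rewrite /upath /= xp'.
Qed.

Lemma has_walk_cat x y z k l :
  has_walk e x y k -> has_walk e y z l -> has_walk e x z (k + l).
Proof.
move=> [p [xp <- <-]] [q [yq <- <-]]; exists (p ++ q).
by rewrite cat_path last_cat xp yq size_cat.
Qed.

Lemma has_walk_sym x y k : has_walk e x y k -> has_walk e y x k.
Proof.
move=> [p [xp <- <-]]; exists (rev (belast x p)).
rewrite rev_path_sym xp size_rev size_belast; split=> //.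
by case: p {xp} => //= z p; rewrite rev_cons last_rcons.
Qed.
End Tree.

Definition diam_bound (m : nat) : nat := if m == 1 then 4 else if m == 2 then 5 else 6.

Section LowerBound.
Variables (T : finType) (e : rel T) (s : T -> T -> bool).
Hypothesis e_sym : symmetric e.
Hypothesis e_irr : irreflexive e.
Hypothesis e_acyc : forall p : seq T, uniq p -> 3 <= size p -> ~~ cycle e p.
Hypothesis s_sym : is_signing e s.
Hypothesis sdeg_neq_m1 : forall v, sdeg e s v != (-1)%R.

Lemma neg_neighbor t u : (sdeg e s t <= -2)%R -> exists z, [&& e t z, ~~ s t z & z != u].
Proof.
move=> le_t; have : 1 < #|[pred z | e t z && ~~ s t z]| by move: le_t; rewrite /sdeg; lia.
case/card_gt1P=> z1 [z2 []]; rewrite !inE => /andP[tz1 sz1] /andP[tz2 sz2] z12.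
have [eq_z1u|z1u] := eqVneq z1 u; last by exists z1; rewrite tz1 sz1.
by exists z2; rewrite tz2 sz2 -eq_z1u eq_sym.
Qed.

Lemma neg_edge_nonleaf t z : e t z -> ~~ s t z -> exists w, e z w && (w != t).
Proof.
move=> tz stz; case: (pickP [pred w | e z w && (w != t)]) => [w zw|z_leaf].
  by exists w.
have nbr_z w : e z w = (w == t).
  apply/idP/eqP => [zw|->]; last by rewrite e_sym.
  by apply/eqP; move: (z_leaf w); rewrite /= zw => /negbFE.
have szt : s z t = s t z by apply: s_sym; rewrite e_sym.
exfalso; move/eqP: (sdeg_neq_m1 z); apply; rewrite /sdeg.
rewrite (@eq_card0 _ [pred w | e z w && s z w]); last first.
  by move=> w; rewrite !inE nbr_z; case: eqP => // ->; rewrite szt (negbTE stz).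
rewrite (@eq_card1 _ t [pred w | e z w && ~~ s z w]) //.
by move=> w; rewrite !inE nbr_z; case: eqP => // ->; rewrite szt stz.
Qed.

Lemma two_steps_avoiding t u : (sdeg e s t <= -2)%R ->
  exists z w, [/\ e t z, e z w, z != u & w != t].
Proof.
case/(neg_neighbor u) => z /and3P[tz stz zu].
by have [w /andP[zw wt]] := neg_edge_nonleaf tz stz; exists z, w.
Qed.

Lemma upath_extend x q : 0 < size q -> (sdeg e s (last x q) <= -2)%R ->
  upath e (x :: q) -> exists z w, upath e (x :: q ++ [:: z; w]).
Proof.
move=> q_gt0 le_t; have [p [u def_xq]] := cons_cat_last2 x q_gt0.
rewrite def_xq => xq; have [z [w [tz zw zu wt]]] := two_steps_avoiding u le_t.
have := upath_rcons e_irr e_acyc xq tz zu; rewrite -[p ++ _]/(p ++ [:: u] ++ [:: _; z]) catA.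
move=> /(upath_rcons e_irr e_acyc)/(_ zw wt) xqzw; exists z, w.
by move: xqzw; rewrite -catA -cat_cons def_xq -catA.
Qed.

Lemma upath_extend_ends x p : 0 < size p ->
  (sdeg e s x <= -2)%R -> (sdeg e s (last x p) <= -2)%R -> upath e (x :: p) ->
  exists y q, upath e (y :: q) /\ size q = size p + 4.
Proof.
move=> p_gt0 le_x le_y /(upath_extend p_gt0 le_y)[z [w]].
rewrite -(upath_rev e_sym) rev_cons rev_cat /= => wx.
have last_x : last w (z :: rcons (rev p) x) = x by rewrite /= last_rcons.
rewrite -last_x in le_x.
have [z' [w' ext]] := upath_extend (q := z :: rcons (rev p) x) isT le_x wx.
exists w, (z :: rcons (rev p) x ++ [:: z'; w']); split=> //.
by rewrite /= size_cat size_rcons size_rev /=; lia.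
Qed.

Lemma upath_extend_vertex a : (sdeg e s a <= -2)%R ->
  exists y q, upath e (y :: q) /\ size q = 4.
Proof.
move=> le_a; have [z [w [az zw _ wa]]] := two_steps_avoiding a le_a.
have wza : upath e [:: w; z; a].
  rewrite -(upath_rev e_sym) /upath /= az zw !inE !negb_or andbT /=.
  have edge_neq u v : e u v -> u != v by apply: contraTneq => ->; rewrite e_irr.
  by rewrite (edge_neq a z az) (edge_neq z w zw) eq_sym wa.
have [z' [w' ext]] := upath_extend (x := w) (q := [:: z; a]) isT le_a wza.
by exists w, [:: z; a; z'; w'].
Qed.

Lemma triangle_free a b c : uniq [:: a; b; c] -> ~~ [&& e a b, e b c & e c a].
Proof. by move=> uniq_abc; have := e_acyc uniq_abc isT; rewrite /= andbT andbA. Qed.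

Lemma nonadjacent_pair (P : pred T) a b c : uniq [:: a; b; c] -> P a -> P b -> P c ->
  exists x y, [/\ x != y, ~~ e x y, P x & P y].
Proof.
move=> uniq_abc Pa Pb Pc; have := triangle_free uniq_abc.
move: uniq_abc; rewrite /= !inE !negb_or andbT => /andP[/andP[ab ac] bc].
have [eab|] := boolP (e a b); last by exists a, b.
have [ebc|] := boolP (e b c); last by exists b, c.
by have [|] := boolP (e c a); last by exists c, a; rewrite eq_sym.
Qed.

Hypothesis e_conn : forall x y, connect e x y.

Lemma far_upath_pair a b : a != b ->
  (sdeg e s a <= -2)%R -> (sdeg e s b <= -2)%R ->
  exists x p, upath e (x :: p) /\ (~~ e a b) + 5 <= size p.
Proof.
move=> ab le_a le_b; have [p [ap last_p]] := upath_connect e_conn a b.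
have p_gt0 : 0 < size p by case: p last_p {ap} => //= eq_ab; rewrite eq_ab eqxx in ab.
rewrite -last_p in le_b; have [x [q [xq size_q]]] := upath_extend_ends p_gt0 le_a le_b ap.
exists x, q; split=> //; rewrite size_q.
case: p ap last_p p_gt0 {le_b size_q} => [|b' [|c p]] // => [/andP[]|_ _ _].
  by move=> /= /andP[ab' _] _ <- _; rewrite ab'.
by case: (e _ _) => /=; lia.
Qed.

Lemma far_upath (ys : seq int) : 0 < size ys -> uniq ys ->
  {in ys, forall y, y < -1}%R -> {in ys, forall y, exists v, sdeg e s v = y} ->
  exists x p, upath e (x :: p) /\ diam_bound (size ys) <= size p.
Proof.
move=> ys_gt0 uniq_ys ys_lt realized.
have low y : y \in ys -> exists2 v, sdeg e s v = y & (sdeg e s v <= -2)%R.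
  move=> ys_y; have [v v_y] := realized y ys_y; exists v => //.
  by rewrite v_y; have := ys_lt y ys_y; lia.
have distinct y y' v v' : y != y' -> sdeg e s v = y -> sdeg e s v' = y' -> v != v'.
  by move=> yy' vy v'y; apply: contraNneq yy' => vv'; rewrite -vy -v'y vv'.
case: ys ys_gt0 uniq_ys low {ys_lt realized} => [|y0 [|y1 [|y2 ys]]] //= _.
- move=> _ low; have [v _ le_v] := low y0 (mem_head _ _).
  by have [x [p [xp size_p]]] := upath_extend_vertex le_v; exists x, p; rewrite size_p.
- rewrite inE andbT => y01 low.
  have [v0 v0_y le_v0] := low y0 (mem_head _ _).
  have [v1 v1_y le_v1] := low y1 (mem_last y0 [:: y1]).
  have [x [p [xp size_p]]] := far_upath_pair (distinct _ _ _ _ y01 v0_y v1_y) le_v0 le_v1.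
  by exists x, p; split=> //; apply: leq_trans size_p; rewrite leq_addl.
rewrite !inE !negb_or => /andP[/andP[y01 /andP[y02 _]] /andP[/andP[y12 _] _]] low.
have [v0 v0_y le_v0] := low y0 ltac:(by rewrite !inE eqxx).
have [v1 v1_y le_v1] := low y1 ltac:(by rewrite !inE eqxx orbT).
have [v2 v2_y le_v2] := low y2 ltac:(by rewrite !inE eqxx !orbT).
have uniq_v : uniq [:: v0; v1; v2].
  by rewrite /= !inE !negb_or (distinct _ _ _ _ y01 v0_y v1_y)
    (distinct _ _ _ _ y02 v0_y v2_y) (distinct _ _ _ _ y12 v1_y v2_y).
have [a [b [ab not_ab le_a le_b]]] :=
  @nonadjacent_pair (fun v => sdeg e s v <= -2)%R _ _ _ uniq_v le_v0 le_v1 le_v2.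
have [x [p [xp size_p]]] := far_upath_pair ab le_a le_b.
by exists x, p; split=> //; rewrite not_ab in size_p.
Qed.
End LowerBound.

Section ParentTree.
Variables (T : finType) (root : T) (parent : T -> T) (depth : T -> nat).
Hypothesis depth_parent : forall x, x != root -> depth (parent x) < depth x.
(* [up x] is the sign of the edge between [x] and its parent. *)
Variable up : T -> bool.

Definition child_of (v u : T) := (u != root) && (parent u == v).
Definition parent_rel : rel T := fun x y => child_of x y || child_of y x.
Definition parent_sign (x y : T) := if child_of y x then up x else up y.
Definition nchildren (v : T) (b : bool) := #|[pred u | child_of v u && (up u == b)]|.

Lemma depth_child v u : child_of v u -> depth v < depth u.
Proof. by case/andP=> u_root /eqP <-; apply: depth_parent. Qed.

Lemma child_of_asym v u : child_of v u -> ~~ child_of u v.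
Proof.
move=> vu; apply/negP => /depth_child uv.
by have := ltn_trans uv (depth_child vu); rewrite ltnn.
Qed.

Lemma parent_rel_sym : symmetric parent_rel.
Proof. by move=> x y; rewrite /parent_rel orbC. Qed.

Lemma parent_rel_irr : irreflexive parent_rel.
Proof. by move=> x; rewrite /parent_rel orbb; apply/negP => /depth_child; rewrite ltnn. Qed.

Lemma connect_root x : connect parent_rel x root.
Proof.
elim: {x}(depth x) {-2}x (leqnn (depth x)) => [|n IHn] x;
  have [->|x_root] := eqVneq x root; rewrite ?connect0 //.
  by move/(leq_trans (depth_parent x_root)).
move=> le_x; apply: connect_trans (IHn (parent x) _).
  by apply: connect1; rewrite /parent_rel /child_of x_root eqxx orbT.
by rewrite -ltnS (leq_trans (depth_parent x_root)).
Qed.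

Lemma parent_rel_conn x y : connect parent_rel x y.
Proof.
apply: connect_trans (connect_root x) _.
by rewrite (sym_connect_sym parent_rel_sym) connect_root.
Qed.

Lemma parent_rel_acyclic (p : seq T) : uniq p -> 3 <= size p -> ~~ cycle parent_rel p.
Proof.
case: p => [//|x0 p0]; set p := x0 :: p0 => uniq_p size_p.
have [v p_v deepest] := @arg_maxnP T x0 (mem p) depth (mem_head _ _).
case: (rot_to p_v) => i q def_q.
rewrite -(rot_cycle i) def_q; rewrite -(rot_uniq i) def_q in uniq_p.
rewrite -(size_rot i) def_q in size_p.
have nbr_parent u : u \in q -> parent_rel v u -> parent v = u.
  move=> q_u; case/orP => [/depth_child vu|/andP[_ /eqP //]].
  have p_u : u \in p by rewrite -(mem_rot i) def_q inE q_u orbT.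
  by have := leq_trans vu (deepest u p_u); rewrite ltnn.
case: q uniq_p size_p nbr_parent {def_q} => [//|w [//|w' q]] uniq_p _ nbr_parent.
apply/negP; rewrite /= rcons_path /= => /and4P[vw _ _]; rewrite parent_rel_sym => lv.
have w_last : w = last w' q.
  by rewrite -(nbr_parent _ (mem_head _ _) vw) (nbr_parent _ _ lv) // inE mem_last orbT.
by move: uniq_p => /= /andP[_ /andP[]]; rewrite w_last mem_last.
Qed.

Lemma parent_tree (x0 : T) : is_tree parent_rel.
Proof.
split; [by exists x0 | exact: parent_rel_sym | by move=> x; rewrite parent_rel_irr |
  exact: parent_rel_conn | exact: parent_rel_acyclic].
Qed.

Lemma parent_signing : is_signing parent_rel parent_sign.
Proof.
move=> x y; rewrite /parent_sign => /orP[] xy; first by rewrite xy (negbTE (child_of_asym xy)).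
by rewrite xy (negbTE (child_of_asym xy)).
Qed.

Lemma parent_sign_child v u : child_of v u -> parent_sign v u = up u.
Proof. by move=> vu; rewrite /parent_sign (negbTE (child_of_asym vu)). Qed.

Lemma card_signed_neighbors v b :
  #|[pred u | parent_rel v u && (parent_sign v u == b)]| =
  ((v != root) && (up v == b)) + nchildren v b.
Proof.
have [->|v_root] := eqVneq v root.
  apply: eq_card => u; rewrite !inE /parent_rel {2}/child_of eqxx /= orbF.
  by case vu: (child_of root u); rewrite // (parent_sign_child vu).
have pv : child_of (parent v) v by rewrite /child_of v_root eqxx.
rewrite (cardD1 (parent v)) !inE /parent_rel /parent_sign pv orbT /=.
congr (_ + _); apply: eq_card => u; rewrite !inE.
have -> : child_of u v = (u == parent v) by rewrite /child_of v_root eq_sym.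
have [->|_] := eqVneq u (parent v); first by rewrite (negbTE (child_of_asym pv)).
by rewrite orbF.
Qed.

Lemma sdeg_parent v : sdeg parent_rel parent_sign v =
  ((((v != root) && up v) + nchildren v true)%:Z -
   (((v != root) && ~~ up v) + nchildren v false)%:Z)%R.
Proof.
have -> : (v != root) && up v = (v != root) && (up v == true) by rewrite eqb_id.
rewrite /sdeg -[~~ up v]eqbF_neg -!card_signed_neighbors.
by congr (Posz _ - Posz _)%R; apply: eq_card => u; rewrite !inE ?eqb_id ?eqbF_neg.
Qed.

Lemma nchildren_inj v b (A : finType) (f : A -> T) : injective f ->
  (forall x, child_of v (f x) && (up (f x) == b)) ->
  (forall u, child_of v u -> up u == b -> exists x, u = f x) -> nchildren v b = #|A|.
Proof.
move=> f_inj f_child f_onto; rewrite -(card_codom f_inj); apply: eq_card => u.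
rewrite !inE; apply/andP/codomP => [[vu /(f_onto u vu)[x ->]]|[x ->]]; first by exists x.
exact/andP/f_child.
Qed.

Lemma nchildren_eq0 v b : (forall u, child_of v u -> up u != b) -> nchildren v b = 0.
Proof.
move=> no_child; apply: eq_card0 => u; rewrite !inE.
by case vu: (child_of v u); rewrite ?(negbTE (no_child u vu)).
Qed.

Lemma has_walk_parent x : x != root -> has_walk parent_rel x (parent x) 1.
Proof.
move=> x_root; exists [:: parent x]; split=> //=.
by rewrite /parent_rel /child_of x_root eqxx orbT.
Qed.

Lemma has_walk_root : depth root = 0 ->
  (forall x, x != root -> depth x = (depth (parent x)).+1) ->
  forall x, has_walk parent_rel x root (depth x).
Proof.
move=> depth_root depth_S x; elim: {x}(depth x) {-2}x (erefl (depth x)) => [|d IHd] x.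
  by have [-> _|/depth_S ->//] := eqVneq x root; exists [::].
have [->|x_root] := eqVneq x root; first by rewrite depth_root.
by rewrite depth_S // => -[/IHd]; apply: has_walk_cat (has_walk_parent x_root).
Qed.
End ParentTree.

(* A root with [np] positive leaves and one negative child ("gadget") for each value [z] of
   [zs]. Gadget [z] has [|z + 1|] children, attached positively iff [z >= 0], so its signed
   degree is [-1 + (z + 1) = z]; when [z < 0] each of these children gets two positive leaves,
   so that every vertex below a gadget has signed degree 1. *)
Section Gadgets.
Variables (np : nat) (zs : seq int).
Local Notation n := (size zs).

Definition gval (i : 'I_n) : int := nth 0%R zs i.
Definition arity (i : 'I_n) : nat := absz (gval i + 1)%R.
Definition grand_up (i : 'I_n) : bool := (0 <= gval i)%R.
Definition subarity (i : 'I_n) : nat := if (gval i < 0)%R then 2 else 0.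

Definition grand := {i : 'I_n & 'I_(arity i)}.
Definition great := {g : grand & 'I_(subarity (tag g))}.
Definition vertex := ((unit + 'I_np) + ('I_n + (grand + great)))%type.

Definition vroot : vertex := inl (inl tt).
Definition vleaf k : vertex := inl (inr k).
Definition vgadget i : vertex := inr (inl i).
Definition vgrand g : vertex := inr (inr (inl g)).
Definition vgreat h : vertex := inr (inr (inr h)).

Definition gparent (v : vertex) : vertex :=
  match v with
  | inr (inr (inl g)) => vgadget (tag g)
  | inr (inr (inr h)) => vgrand (tag h)
  | _ => vroot
  end.

Definition gdepth (v : vertex) : nat :=
  match v with
  | inl (inl _) => 0
  | inl (inr _) | inr (inl _) => 1
  | inr (inr (inl _)) => 2
  | inr (inr (inr _)) => 3
  end.

Definition gup (v : vertex) : bool :=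
  match v with
  | inr (inl _) => false
  | inr (inr (inl g)) => grand_up (tag g)
  | _ => true
  end.

Definition glabel (v : vertex) : int :=
  match v with
  | inl (inl _) => (np%:Z - n%:Z)%R
  | inr (inl i) => gval i
  | _ => 1%R
  end.

Lemma gdepth_parent v : v != vroot -> gdepth v = (gdepth (gparent v)).+1.
Proof. by case: v => [[[]|k]|[i|[g|h]]]. Qed.

Lemma gdepth_parent_lt v : v != vroot -> gdepth (gparent v) < gdepth v.
Proof. by move/gdepth_parent ->. Qed.

Definition gtree := parent_rel vroot gparent.
Definition gsign := parent_sign vroot gparent gup.

Lemma gtree_is_tree : is_tree gtree.
Proof. exact: parent_tree gdepth_parent_lt vroot. Qed.

Lemma gsign_is_signing : is_signing gtree gsign.
Proof. exact: parent_signing gdepth_parent_lt gup. Qed.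

Local Notation nchildren := (nchildren vroot gparent gup).

Lemma tagged_inj (I : eqType) (T_ : I -> eqType) (i : I) : injective (Tagged T_ (i := i)).
Proof. by move=> x y /eqP; rewrite eq_Tagged => /eqP. Qed.

Lemma nchildren_root b : nchildren vroot b = if b then np else n.
Proof.
case: b => /=.
  rewrite -[RHS]card_ord; apply: (nchildren_inj (f := vleaf)) => [k k' [] //|k //|].
  by case=> [[[]|k]|[i|[g|h]]] //= _ _; exists k.
rewrite -[RHS]card_ord; apply: (nchildren_inj (f := vgadget)) => [i i' [] //|i //|].
by case=> [[[]|k]|[i|[g|h]]] //= _ _; exists i.
Qed.

Lemma nchildren_leaf k b : nchildren (vleaf k) b = 0.
Proof. by apply: nchildren_eq0 => -[[[]|k']|[i|[g|h]]]. Qed.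

Lemma nchildren_gadget i b : nchildren (vgadget i) b = (grand_up i == b) * arity i.
Proof.
have [<-|sign_b] := eqVneq (grand_up i) b; last first.
  by apply: nchildren_eq0 => -[[[]|k]|[j|[[j k]|h]]] //= /andP[_ /eqP[->]].
rewrite mul1n -[RHS]card_ord.
apply: (nchildren_inj (f := fun k => vgrand (Tagged (fun j => 'I_(arity j)) k)))
  => [k k' [/tagged_inj] //|k|].
  by rewrite /child_of /= !eqxx.
by case=> [[[]|k]|[j|[[j k]|h]]] //= /andP[_ /eqP[ji]] _; subst j; exists k.
Qed.

Lemma nchildren_grand g b : nchildren (vgrand g) b = b * subarity (tag g).
Proof.
case: b; last by apply: nchildren_eq0 => -[[[]|k]|[j|[g'|h]]].
rewrite mul1n -[RHS]card_ord.
apply: (nchildren_inj (f := fun l => vgreat (Tagged (fun g' => 'I_(subarity (tag g'))) l)))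
  => [l l' [/tagged_inj] //|l|].
  by rewrite /child_of /= !eqxx.
by case=> [[[]|k]|[j|[g'|[g' l]]]] //= /andP[_ /eqP[gg']] _; subst g'; exists l.
Qed.

Lemma nchildren_great h b : nchildren (vgreat h) b = 0.
Proof. by apply: nchildren_eq0 => -[[[]|k]|[j|[g|h']]]. Qed.

Lemma sdeg_gtree v : sdeg gtree gsign v = glabel v.
Proof.
rewrite (sdeg_parent gdepth_parent_lt).
case: v => [[[]|k]|[i|[g|h]]]; rewrite ?nchildren_root ?nchildren_leaf ?nchildren_gadget
  ?nchildren_grand ?nchildren_great /= ?add0n //.
  by rewrite /grand_up /arity; have [?|?] := leP 0%R (gval i) => /=; lia.
by rewrite /grand_up /subarity; have [?|?] := leP 0%R (gval (tag g)) => /=; lia.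
Qed.

Lemma gtree_realizes (D : int -> Prop) :
  (forall w, D w <-> (w == np%:Z - n%:Z)%R || (w \in zs)) -> 1%R \in zs ->
  realizes gtree gsign D.
Proof.
move=> defD zs_1; split=> [v|w /defD /orP[/eqP ->|zs_w]]; first rewrite defD sdeg_gtree.
- by case: v => [[[]|k]|[i|[g|h]]] /=; rewrite ?eqxx ?mem_nth ?zs_1 ?orbT.
- by exists vroot; rewrite sdeg_gtree.
have idx_w : index w zs < n by rewrite index_mem.
by exists (vgadget (Ordinal idx_w)); rewrite sdeg_gtree /= /gval nth_index.
Qed.

Lemma gtree_walk_root v : has_walk gtree v vroot (gdepth v).
Proof. by apply: has_walk_root => //; apply: gdepth_parent. Qed.

Lemma gtree_dist_le_depth x y k : dist gtree x y k -> k <= gdepth x + gdepth y.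
Proof.
case=> _; apply; apply: has_walk_cat (gtree_walk_root x) _.
exact/(has_walk_sym (@parent_rel_sym _ _ _))/gtree_walk_root.
Qed.

Lemma great_deep (h : great) : (gval (tag (tag h)) < -1)%R.
Proof.
case: h => [[i j] l] /=; have arity_gt0 : 0 < arity i := leq_ltn_trans (leq0n j) (ltn_ord j).
have : 0 < subarity i := leq_ltn_trans (leq0n l) (ltn_ord l).
by move: arity_gt0; rewrite /arity /subarity; case: ifP => // neg_i; lia.
Qed.

Lemma gtree_dist_le6 x y k : dist gtree x y k -> k <= 6.
Proof.
move/gtree_dist_le_depth/leq_trans; apply.
by case: x y => [[[]|?]|[?|[?|?]]] [[[]|?]|[?|[?|?]]].
Qed.

Lemma gtree_dist_le4 x y k : ~~ has (fun z => z < -1)%R zs -> dist gtree x y k -> k <= 4.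
Proof.
move=> no_deep /gtree_dist_le_depth/leq_trans; apply.
have depth_le2 v : gdepth v <= 2.
  case: v => [[[]|?]|[?|[?|h]]] //; move/hasPn: no_deep => /(_ (gval (tag (tag h)))).
  by rewrite mem_nth // great_deep => /(_ isT).
by rewrite (leq_add (depth_le2 x) (depth_le2 y)).
Qed.

Lemma has_walk_great_gadget (h : great) : has_walk gtree (vgreat h) (vgadget (tag (tag h))) 2.
Proof.
exact: has_walk_cat (has_walk_parent gparent (root := vroot) (x := vgreat h) isT)
  (has_walk_parent gparent (root := vroot) (x := vgrand (tag h)) isT).
Qed.

Lemma gtree_dist_le5 x y k : ~~ has (fun z => z < -1)%R (behead zs) -> dist gtree x y k -> k <= 5.
Proof.
move=> no_deep; case: x => [[[]|?]|[?|[?|h]]]; case: y => [[[]|?]|[?|[?|h']]] xy;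
  try exact: leq_trans (gtree_dist_le_depth xy) _.
have gadget0 (g : great) : nat_of_ord (tag (tag g)) = 0.
  exact: hasNbehead_nth no_deep (ltn_ord _) (great_deep g).
have same : tag (tag h) = tag (tag h') by apply: val_inj; rewrite /= !gadget0.
apply: (@leq_trans 4) => //; case: xy => _; apply; apply: has_walk_cat (has_walk_great_gadget h) _.
by rewrite same; apply: has_walk_sym (has_walk_great_gadget h') => //; apply: parent_rel_sym.
Qed.
End Gadgets.

Lemma diamD_intro (D : int -> Prop) (d : nat) :
  (exists (T : finType) (e : rel T) (s : T -> T -> bool),
     [/\ is_tree e, is_signing e s, realizes e s D & forall x y k, dist e x y k -> k <= d]) ->
  (forall (T : finType) (e : rel T) (s : T -> T -> bool),
     is_tree e -> is_signing e s -> realizes e s D -> exists x y k, dist e x y k /\ d <= k) ->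
  diamD D d.
Proof.
move=> [T [e [s [tree_e sign_s real_s small]]]] far; split.
  exists T, e, s; split=> //; split=> //.
  have [x [y [k [xy le_dk]]]] := far T e s tree_e sign_s real_s.
  by exists x, y; rewrite (_ : d = k) //; apply/eqP; rewrite eqn_leq le_dk (small x y k).
move=> T' e' s' d' tree' sign' real' [_ diam'].
have [x [y [k [xy le_dk]]]] := far T' e' s' tree' sign' real'.
exact: leq_trans le_dk (diam' x y k xy).
Qed.

Lemma realizes_far (D : int -> Prop) (ys : seq int) :
  0 < size ys -> uniq ys -> {in ys, forall y, y < -1}%R -> {in ys, forall y, D y} ->
  ~ D (-1)%R -> forall (T : finType) (e : rel T) (s : T -> T -> bool),
  is_tree e -> is_signing e s -> realizes e s D ->
  exists x y k, dist e x y k /\ diam_bound (size ys) <= k.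
Proof.
move=> ys_gt0 uniq_ys ys_lt D_ys D_m1 T e s [_ e_sym e_irr e_conn e_acyc] s_sym [D_sdeg sdeg_D].
have sdeg_neq_m1 v : sdeg e s v != (-1)%R.
  by apply/eqP => sdeg_m1; apply: D_m1; rewrite -sdeg_m1.
have [x [p [xp le_p]]] := far_upath e_sym (fun x => negbTE (e_irr x)) e_acyc s_sym
  sdeg_neq_m1 e_conn ys_gt0 uniq_ys ys_lt (fun y ys_y => sdeg_D y (D_ys y ys_y)).
by exists x, (last x p), (size p); split=> //; apply: dist_upath.
Qed.

(* The root has signed degree [y0]: besides the [ys ++ ws] gadgets it has [|y0|] gadgets of
   value 1 (which also realize 1) and [size (ys ++ ws)] positive leaves. Only the gadgets of the
   values in [ys] reach depth 3. *)
Lemma gtree_witness (D : int -> Prop) (y0 : int) (ys ws : seq int) :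
  {in y0 :: ys, forall y, y < -1}%R -> {in ws, forall w, 0 <= w}%R ->
  (forall w, D w <-> w \in 1%R :: (y0 :: ys) ++ ws) ->
  exists (T : finType) (e : rel T) (s : T -> T -> bool),
    [/\ is_tree e, is_signing e s, realizes e s D &
        forall x y k, dist e x y k -> k <= diam_bound (size (y0 :: ys))].
Proof.
move=> ys_lt ws_ge0 defD; have y0_lt := ys_lt y0 (mem_head _ _).
have y0_abs : 0 < `|y0| by lia.
have no_deep : ~~ has (fun z => z < -1)%R (ws ++ nseq `|y0| 1%R).
  by rewrite has_cat has_nseq andbF orbF; apply/hasPn => w /ws_ge0; lia.
have no_deep1 : size ys = 0 -> ~~ has (fun z => z < -1)%R (ys ++ ws ++ nseq `|y0| 1%R).
  by move/size0nil ->.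
have no_deep2 : size ys = 1 ->
    ~~ has (fun z => z < -1)%R (behead (ys ++ ws ++ nseq `|y0| 1%R)).
  by case: ys {ys_lt defD no_deep1} => [|? []].
set zs := ys ++ ws ++ nseq `|y0| 1%R.
exists (vertex (size (ys ++ ws)) zs), (@gtree _ zs), (@gsign _ zs); split.
- exact: gtree_is_tree.
- exact: gsign_is_signing.
- apply: gtree_realizes => [w|]; last by rewrite !mem_cat mem_nseq eqxx y0_abs !orbT.
  rewrite defD (_ : (_ - _)%R = y0); last by rewrite /zs !size_cat size_nseq; lia.
  rewrite /zs !inE !mem_cat mem_nseq y0_abs.
  by split; case: (w == 1%R); case: (w == y0); case: (w \in ys); case: (w \in ws).
move=> x y k; rewrite /diam_bound /=.
case: eqP => [[/no_deep1 nd]|_]; first exact: gtree_dist_le4 nd.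
case: eqP => [[/no_deep2 nd]|_]; first exact: gtree_dist_le5 nd.
exact: gtree_dist_le6.
Qed.

Lemma diamD_signed_values (D : int -> Prop) (ys ws : seq int) :
  0 < size ys -> uniq ys -> {in ys, forall y, y < -1}%R -> {in ws, forall w, 0 <= w}%R ->
  (forall w, D w <-> w \in 1%R :: ys ++ ws) -> diamD D (diam_bound (size ys)).
Proof.
move=> ys_gt0 uniq_ys ys_lt ws_ge0 defD; apply: diamD_intro.
  case: ys ys_gt0 ys_lt defD {uniq_ys} => // y0 ys _ ys_lt defD.
  exact: gtree_witness ys_lt ws_ge0 defD.
apply: realizes_far => // [y ys_y|/defD]; first by apply/defD; rewrite inE mem_cat ys_y orbT.
by rewrite inE mem_cat => /orP[//|/orP[/ys_lt|/ws_ge0]].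
Qed.

Theorem mainTheorem6 (ys xs : seq int)
  (hm : (1 <= size ys)%N)
  (hyu : uniq ys) (hy : forall y, y \in ys -> (y < -1)%R)
  (hxu : uniq xs) (hx : forall x, x \in xs -> (1 < x)%R) :
  let D := fun z : int => z = 1%R \/ z \in ys \/ z \in xs in
  let d := if size ys == 1%N then 4%N else if size ys == 2%N then 5%N else 6%N in
  diamD D d /\ diamD (fun z => D z \/ z = 0%R) d.
Proof.
move=> D d; have xs_ge0 : {in xs, forall x, 0 <= x}%R by move=> x /hx; lia.
have xs0_ge0 : {in 0%R :: xs, forall x, 0 <= x}%R.
  by move=> x; rewrite inE => /orP[/eqP->|/xs_ge0].
split.
  apply: (diamD_signed_values (ws := xs)) => // w; rewrite /D inE mem_cat.
  by split=> [[->|[ys_w|xs_w]]|/or3P[/eqP->|ys_w|xs_w]];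
    rewrite ?eqxx ?ys_w ?xs_w ?orbT //; [left | right; left | right; right].
apply: (diamD_signed_values _ _ _ xs0_ge0) => // w; rewrite /D inE mem_cat inE.
by split=> [[[->|[ys_w|xs_w]]|->]|/or4P[/eqP->|ys_w|/eqP->|xs_w]];
  rewrite ?eqxx ?ys_w ?xs_w ?orbT //; [left; left | left; right; left | right | left; right; right].
Qed.
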